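(* For $n\ge0$ let $$P_n(z)=\frac{\imath^n}{2^n}\sum_{k=0}^n\binom{n}{k}\left(-\imath z+\tfrac12-k\right)_n$$ (the polynomial associated to the Weyl ordering $a_{n,k}=2^{-n}\binom nk$). Then, as polynomials in $z$, $$P_n(z)=\frac{n!}{(2\imath)^n}\,{}_3F_2\!\left(\begin{matrix}-n,\ n+1,\ \tfrac14-\tfrac{\imath z}{2}\\ \tfrac12,\ 1\end{matrix}\,\Big|\,1\right).$$
   Context: $\imath=\sqrt{-1}$; $(x)_n=x(x+1)\cdots(x+n-1)$. ${}_3F_2\!\left(\begin{smallmatrix}a_1,a_2,a_3\\ b_1,b_2\end{smallmatrix}\big|x\right)=\sum_{k\ge0}\frac{(a_1)_k(a_2)_k(a_3)_k}{(b_1)_k(b_2)_k}\frac{x^k}{k!}$ (a terminating sum here since $a_1=-n$). *)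

From HB Require Import structures.
From mathcomp Require Import all_boot all_order all_algebra all_field.
Set Implicit Arguments. Unset Strict Implicit. Unset Printing Implicit Defensive.
Import Order.TTheory GRing.Theory Num.Theory.
Local Open Scope ring_scope.

Definition rising (R : pzSemiRingType) (x : R) (n : nat) : R :=
  \prod_(i < n) (x + i%:R).

Definition Pn (n : nat) : {poly algC} :=
  ('i ^+ n / 2 ^+ n) *:
    \sum_(k < n.+1) ('C(n, k)%:R : algC) *:
        rising (- ('i *: 'X) + (1 / 2 - (k : nat)%:R)%:P) n.

(* Terminating 3F2( -n, a2, a3 ; b1, b2 | x ) with a3 a polynomial in z:
   sum_{k>=0} (-n)_k (a2)_k (a3)_k / ((b1)_k (b2)_k) x^k / k!.
   Since (-n)_k = 0 for k > n, the sum is over k = 0..n. *)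
Definition F32_term (n : nat) (a2 : algC) (a3 : {poly algC}) (b1 b2 x : algC)
  : {poly algC} :=
  \sum_(k < n.+1)
    ((rising (- (n%:R)) k * rising a2 k / (rising b1 k * rising b2 k)
       * x ^+ k / (k`!)%:R) *: rising a3 k).

From HB Require Import structures.
From mathcomp Require Import all_boot all_order all_algebra all_field ring zify.
Import Order.TTheory GRing.Theory Num.Theory.
Local Open Scope ring_scope.
Set Implicit Arguments. Unset Strict Implicit.

(* Put y = 1/4 - i z / 2, so that the argument of the rising factorials in
   P_n is -iz + 1/2 - k = 2y - k.

   1. In any commutative ring containing h = 1/2 we prove the key identity
        (n+1)_n sum_k C(n,k) (2y-k)_n = 4^n sum_i C(n,i) (1/2-n)_{n-i} (i+1)_n (y)_i.
      Each (2y-k)_n is an n-th finite difference of (2y-k-i)_{2n}; summing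
      over k against binomial weights collapses the double sum onto the
      diagonal, leaving n-th differences of (2(y-j))_{2n}.  The duplication
      formula and Chu-Vandermonde expand these, and a second n-th difference
      turns (y-j)_{n+i} into (y)_i.
   2. In a field of characteristic 0 we evaluate the rising factorials at
      the special points (n+1, -n, 1/2, 1/2-n) through factorials, and check
      that the resulting coefficients are those of n!/(2i)^n 3F2(-n, n+1, y; 1/2, 1 | 1).
   3. Specialising (1) to polynomials over algC gives the expansion of P_n
      in the basis (y)_k, and (2) identifies it term by term with the 3F2. *)

Section RisingFactorial.
Variable R : comNzRingType.
Implicit Types (x a h z : R).

Lemma rising0 x : rising x 0 = 1.
Proof. by rewrite /rising big_ord0. Qed.

Lemma risingSr x n : rising x n.+1 = rising x n * (x + n%:R).
Proof. by rewrite /rising big_ord_recr. Qed.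

Lemma risingSl x n : rising x n.+1 = x * rising (x + 1) n.
Proof.
rewrite /rising big_ord_recl addr0; congr (_ * _); apply: eq_bigr => i _.
by rewrite lift0 mulrS addrA.
Qed.

Lemma risingD x m n : rising x (m + n) = rising x m * rising (x + m%:R) n.
Proof.
rewrite /rising big_split_ord /=; congr (_ * _); apply: eq_bigr => i _.
by rewrite natrD addrA.
Qed.

Lemma rising_backward_diff x m :
  rising x m.+1 - rising (x - 1) m.+1 = m.+1%:R * rising x m.
Proof. by rewrite risingSr risingSl subrK mulrSr; ring. Qed.

Lemma rising_reflect a m : rising (a - m%:R) m = (-1) ^+ m * rising (1 - a) m.
Proof.
elim: m => [|m IH]; first by rewrite !rising0 mulr1.
rewrite risingSl risingSr exprS.
have -> : a - m.+1%:R + 1 = a - m%:R by rewrite mulrSr; ring.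
by rewrite IH mulrSr; ring.
Qed.

Lemma rising_duplication h z n : h + h = 1 ->
  rising (z + z) (n + n) = 4 ^+ n * (rising z n * rising (z + h) n).
Proof.
move=> hh; elim: n => [|n IH]; first by rewrite !rising0 expr0 !mul1r.
have step : (z + z + (n + n)%:R) * (z + z + (n + n).+1%:R)
            = 4 * ((z + n%:R) * (z + n%:R + h)).
  have -> : (z + z + (n + n).+1%:R) = z + z + (n + n)%:R + (h + h).
    by rewrite hh mulrSr addrA.
  by rewrite natrD; ring.
by rewrite addSn addnS !risingSr IH -mulrA step exprS; ring.
Qed.
End RisingFactorial.

Section BinomialSums.
Variable R : comNzRingType.
Implicit Types (x a b : R) (f g : nat -> R).

(* Binomial transform sum_i C(n,i) f(i) and its alternating version
   sum_i (-1)^i C(n,i) f(i), which is (-1)^n times the n-th forward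
   difference of f at 0. *)
Definition binsum n f : R := \sum_(i < n.+1) 'C(n, i)%:R * f i.
Definition altbinsum n f : R := \sum_(i < n.+1) (-1) ^+ i * 'C(n, i)%:R * f i.

Lemma eq_binsum n f g : f =1 g -> binsum n f = binsum n g.
Proof. by move=> fg; apply: eq_bigr => i _; rewrite fg. Qed.

Lemma eq_altbinsum n f g : f =1 g -> altbinsum n f = altbinsum n g.
Proof. by move=> fg; apply: eq_bigr => i _; rewrite fg. Qed.

Lemma binsumD n f g : binsum n f + binsum n g = binsum n (fun i => f i + g i).
Proof. by rewrite /binsum -big_split; apply: eq_bigr => i _; rewrite mulrDr. Qed.

Lemma altbinsumD n f g :
  altbinsum n f + altbinsum n g = altbinsum n (fun i => f i + g i).
Proof. by rewrite /altbinsum -big_split; apply: eq_bigr => i _; rewrite mulrDr. Qed.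

Lemma binsumZ n c f : c * binsum n f = binsum n (fun i => c * f i).
Proof. by rewrite /binsum mulr_sumr; apply: eq_bigr => i _; ring. Qed.

Lemma altbinsumZ n c f : altbinsum n (fun i => c * f i) = c * altbinsum n f.
Proof. by rewrite /altbinsum mulr_sumr; apply: eq_bigr => i _; ring. Qed.

Lemma binsumS n f : binsum n.+1 f = binsum n f + binsum n (fun i => f i.+1).
Proof.
rewrite /binsum big_ord_recl.
under eq_bigr => i _ do rewrite lift0 binS natrD mulrDl.
rewrite big_split /= addrA; congr (_ + _).
rewrite [in RHS]big_ord_recl big_ord_recr /= (@bin_small n n.+1) // mul0r addr0 !bin0.
by congr (_ + _); apply: eq_bigr => i _; rewrite lift0.
Qed.

Lemma altbinsumS n f : altbinsum n.+1 f = altbinsum n (fun i => f i - f i.+1).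
Proof.
have toB m g : altbinsum m g = binsum m (fun i => (-1) ^+ i * g i).
  by apply: eq_bigr => i _; ring.
rewrite !toB binsumS binsumD; apply: eq_binsum => i.
by rewrite exprS; ring.
Qed.

Lemma exchange_altbinsum n (K : nat -> nat -> R) :
  altbinsum n (fun j => binsum n (K ^~ j)) = binsum n (fun i => altbinsum n (K i)).
Proof.
rewrite /altbinsum /binsum; under eq_bigr do rewrite mulr_sumr.
rewrite exchange_big; apply: eq_bigr => i _; rewrite mulr_sumr.
by apply: eq_bigr => j _; ring.
Qed.

Lemma rising_vandermonde a b n :
  rising (a + b) n = binsum n (fun i => rising a i * rising b (n - i)).
Proof.
elim: n => [|n IH].
  by rewrite /binsum big_ord_recl big_ord0 /= !rising0 !mul1r addr0.
rewrite binsumS risingSr IH /binsum mulr_suml -big_split /=.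
apply: eq_bigr => -[i /= lt_in] _.
by rewrite subSS subSn // !risingSr natrB //; ring.
Qed.

Lemma altbinsum_rising x m n :
  altbinsum n (fun i => rising (x - i%:R) (m + n)) = rising m.+1%:R n * rising x m.
Proof.
elim: n => [|n IH].
  by rewrite /altbinsum big_ord_recl big_ord0 /= addr0 subr0 addn0 rising0 !mul1r.
rewrite altbinsumS addnS.
rewrite (@eq_altbinsum _ _ (fun i => (m + n).+1%:R * rising (x - i%:R) (m + n))).
  by rewrite altbinsumZ IH risingSr -natrD addSn; ring.
by move=> i; rewrite -rising_backward_diff mulrSr opprD addrA.
Qed.

Lemma binsum_altbinsum_diag n f :
  binsum n (fun l => altbinsum n (fun m => f (l + m)%N))
  = altbinsum n (fun j => f (j + j)%N).
Proof.
elim: n f => [|n IH] f.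
  by rewrite /binsum /altbinsum !big_ord_recl !big_ord0 /= !addr0 !mul1r.
rewrite binsumS binsumD altbinsumS.
transitivity (binsum n (fun l => altbinsum n (fun m => f (l + m)%N - f (l + m).+2))).
  apply: eq_binsum => l /=; rewrite !altbinsumS altbinsumD.
  by apply: eq_altbinsum => m; rewrite !addSn !addnS; ring.
rewrite (IH (fun k => f k - f k.+2)).
by apply: eq_altbinsum => j; rewrite addSn addnS.
Qed.
End BinomialSums.

Section WeylSum.
Variables (R : comNzRingType) (h : R).
Hypothesis hh : h + h = 1.

(* Writing each (2y - k)_n as an n-th difference of (2y - k - i)_{2n} and
   summing over k collapses the double sum onto the diagonal k = i. *)
Lemma weyl_sum_diag (y : R) n :
  rising n.+1%:R n * binsum n (fun k => rising (y + y - k%:R) n)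
  = altbinsum n (fun j => rising ((y - j%:R) + (y - j%:R)) (n + n)).
Proof.
rewrite binsumZ.
transitivity (binsum n (fun k => altbinsum n
                (fun i => rising (y + y - (k + i)%N%:R) (n + n)))).
  apply: eq_binsum => k; rewrite -altbinsum_rising.
  by apply: eq_altbinsum => i; rewrite natrD opprD addrA.
rewrite (binsum_altbinsum_diag n (fun l => rising (y + y - l%:R) (n + n))).
by apply: eq_altbinsum => j; congr rising; rewrite natrD; ring.
Qed.

(* Duplication followed by Chu-Vandermonde on (z + 1/2)_n, with h = 1/2. *)
Lemma rising_duplication_expand (z : R) n :
  rising (z + z) (n + n)
  = 4 ^+ n * binsum n (fun i => rising (h - n%:R) (n - i) * rising z (n + i)).
Proof.
rewrite (rising_duplication _ _ hh); congr (_ * _).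
have -> : z + h = (z + n%:R) + (h - n%:R) by ring.
by rewrite rising_vandermonde binsumZ; apply: eq_binsum => i; rewrite risingD; ring.
Qed.

Lemma weyl_sum_identity (y : R) n :
  rising n.+1%:R n * binsum n (fun k => rising (y + y - k%:R) n)
  = 4 ^+ n * binsum n (fun i =>
      rising (h - n%:R) (n - i) * rising i.+1%:R n * rising y i).
Proof.
rewrite weyl_sum_diag.
rewrite (@eq_altbinsum R n _ _ (fun j => rising_duplication_expand (y - j%:R) n)).
rewrite altbinsumZ (exchange_altbinsum n
  (fun i j => rising (h - n%:R) (n - i) * rising (y - j%:R) (n + i))).
congr (_ * _); apply: eq_binsum => i.
by rewrite altbinsumZ addnC altbinsum_rising mulrA.
Qed.
End WeylSum.

Section RisingValues.
Variable F : numFieldType.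
Implicit Types (x : F) (m n k : nat).

Lemma natr_fact_neq0 k : (k`!%:R : F) != 0.
Proof. by rewrite pnatr_eq0 -lt0n fact_gt0. Qed.

Lemma rising_gt0 x k : 0 < x -> 0 < rising x k.
Proof. by move=> x_gt0; apply: prodr_gt0 => i _; rewrite ltr_wpDr. Qed.

Lemma natr_bin n k : (k <= n)%N ->
  ('C(n, k)%:R : F) = n`!%:R / (k`!%:R * (n - k)`!%:R).
Proof.
move=> le_kn; rewrite -(bin_fact le_kn) !natrM mulfK //.
by rewrite mulf_neq0 ?natr_fact_neq0.
Qed.

Lemma rising_natS m k : rising (m.+1%:R : F) k = (m + k)`!%:R / m`!%:R.
Proof.
elim: k => [|k IH]; first by rewrite rising0 addn0 divff ?natr_fact_neq0.
by rewrite risingSr IH addnS factS natrM -natrD addSn; ring.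
Qed.

Lemma rising_neg_nat n k : (k <= n)%N ->
  rising (- n%:R : F) k = (-1) ^+ k * n`!%:R / (n - k)`!%:R.
Proof.
elim: k => [|k IH] lt_kn; first by rewrite rising0 subn0 mul1r divff ?natr_fact_neq0.
have [le_kn sub_k] : (k <= n)%N /\ (n - k = (n - k.+1).+1)%N by split; lia.
rewrite risingSr IH // sub_k factS natrM exprS.
have -> : (- n%:R + k%:R : F) = - (n - k.+1).+1%:R by rewrite -sub_k natrB //; ring.
by field; rewrite natr_fact_neq0 nat1r pnatr_eq0.
Qed.

Lemma rising_half n : rising (1 / 2 : F) n = (n + n)`!%:R / (4 ^+ n * n`!%:R).
Proof.
elim: n => [|n IH]; first by rewrite rising0 expr0 mul1r divff // natr_fact_neq0.
rewrite risingSr IH addSn addnS !factS !natrM exprS.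
rewrite -[(n + n).+2%:R]natr1 -[(n + n).+1%:R]natr1 -[n.+1%:R]natr1 natrD.
by field; rewrite natr_fact_neq0 natr1 pnatr_eq0 expf_neq0 // pnatr_eq0.
Qed.

Lemma rising_half_neq0 n : rising (1 / 2 : F) n != 0.
Proof. by rewrite gt_eqF // rising_gt0 // divr_gt0. Qed.

Lemma rising_half_shift n k : (k <= n)%N ->
  rising (1 / 2 - n%:R : F) (n - k) = (-1) ^+ (n - k) * rising (1 / 2) n / rising (1 / 2) k.
Proof.
move=> le_kn.
have -> : (1 / 2 - n%:R : F) = (1 / 2 - k%:R) - (n - k)%:R by rewrite natrB //; ring.
rewrite rising_reflect.
have -> : (1 - (1 / 2 - k%:R) : F) = 1 / 2 + k%:R by field.
by rewrite -[in rising _ n](subnKC le_kn) risingD; field; rewrite rising_half_neq0.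
Qed.
End RisingValues.

Section WeylCoefficient.
Variable C : numClosedFieldType.

(* The coefficient of (y)_k produced by the key identity, normalised as in P_n. *)
Definition weyl_coef n k : C :=
  'i ^+ n / 2 ^+ n / rising n.+1%:R n
  * (4 ^+ n * 'C(n, k)%:R * rising (1 / 2 - n%:R) (n - k) * rising k.+1%:R n).

Lemma weyl_coefE n k : (k <= n)%N ->
  weyl_coef n k = n`!%:R / (2 * 'i) ^+ n *
    (rising (- n%:R) k * rising n.+1%:R k / (rising (1 / 2) k * rising 1 k)
       * 1 ^+ k / k`!%:R).
Proof.
move=> le_kn.
have sign_sub : ((-1) ^+ (n - k) : C) = (-1) ^+ n * (-1) ^+ k.
  by rewrite -[in RHS](subnK le_kn) exprD -mulrA -expr2 sqrr_sign mulr1.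
have inv_2i : ((2 * 'i) ^+ n)^-1 = (-1) ^+ n * 'i ^+ n / 2 ^+ n :> C.
  by rewrite exprMn invfM -[('i ^+ n)^-1]exprVn invCi [(- 'i) ^+ n]exprNn mulrC.
rewrite /weyl_coef natr_bin // rising_half_shift // rising_neg_nat //.
rewrite (rising_natS _ n k) (rising_natS _ n n) (rising_natS _ k n) (rising_natS _ 0 k).
rewrite rising_half sign_sub [_ / (2 * 'i) ^+ n]mulrC inv_2i addnC add0n fact0 expr1n.
by field; rewrite !natr_fact_neq0 rising_half_neq0 !expf_neq0 ?pnatr_eq0.
Qed.
End WeylCoefficient.
Arguments weyl_coef {C} n k.

Lemma rmorph_rising (R S : comNzRingType) (f : {rmorphism R -> S}) x n :
  f (rising x n) = rising (f x) n.
Proof.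
by rewrite rmorph_prod; apply: eq_bigr => i _; rewrite rmorphD rmorph_nat.
Qed.

Section WeylPolynomial.
Local Notation y := ((1 / 4)%:P - ('i / 2) *: 'X : {poly algC}).

(* The constant polynomial 1/2 plays the role of h in the key identity. *)
Lemma half_polyC : (1 / 2 : algC)%:P + (1 / 2)%:P = 1.
Proof. by rewrite -polyCD -polyC1; congr _%:P; field. Qed.

Lemma weyl_arg k : - ('i *: 'X) + (1 / 2 - k%:R)%:P = y + y - k%:R.
Proof.
have twice_X : ('i / 2) *: 'X + ('i / 2) *: 'X = 'i *: 'X :> {poly algC}.
  by rewrite -scalerDl; congr (_ *: _); field.
have twice_C : (1 / 4 : algC)%:P + (1 / 4)%:P = (1 / 2)%:P.
  by rewrite -polyCD; congr _%:P; field.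
by rewrite polyCB polyC_natr -twice_X -twice_C; ring.
Qed.

Lemma Pn_binsum n :
  Pn n = ('i ^+ n / 2 ^+ n) *: binsum n (fun k => rising (y + y - k%:R) n).
Proof.
congr (_ *: _); apply: eq_bigr => k _.
by rewrite weyl_arg scaler_nat mulr_natl.
Qed.

Lemma Pn_expansion n : Pn n = \sum_(k < n.+1) weyl_coef n k *: rising y k.
Proof.
set c := rising (n.+1%:R : algC) n.
have c_neq0 : c != 0 by rewrite gt_eqF ?rising_gt0 ?ltr0Sn.
have := weyl_sum_identity half_polyC y n.
rewrite -polyC_natr -(rmorph_rising polyC) -/c mul_polyC => key.
rewrite Pn_binsum -[binsum _ _](scalerK c_neq0) key /binsum mulr_sumr !scaler_sumr.
apply: eq_bigr => k _.
rewrite -!polyC_natr -polyCB -!(rmorph_rising polyC) -(rmorphXn polyC).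
rewrite !mulrA -!polyCM mul_polyC !scalerA; congr (_ *: _).
Qed.
End WeylPolynomial.

Theorem mainTheorem15 (n : nat) :
  Pn n =
  ((n`!)%:R / (2 * 'i) ^+ n) *:
    F32_term n (n.+1)%:R ((1 / 4)%:P - ('i / 2) *: 'X) (1 / 2) 1 1.
Proof.
rewrite Pn_expansion /F32_term scaler_sumr; apply: eq_bigr => k _.
by rewrite scalerA weyl_coefE // -ltnS.
Qed.
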